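(* Let $R$ be a commutative Noetherian ring with unity such that $\Gamma_E(R)$ is a fan graph with at least four vertices. Then: (1) $R$ has exactly one associated prime $\mathfrak p$, i.e. $\operatorname{Ass}(R)=\{\mathfrak p\}$; (2) $\mathfrak p^3=0$; (3) the characteristic of $R$ is $2$, $4$, or $8$.
   Context: For $x,y\in R$ write $x\sim y$ iff $\operatorname{ann}(x)=\operatorname{ann}(y)$; $[x]$ denotes the equivalence class of $x$. Let $Z^*(R)$ be the set of nonzero zero divisors of $R$. The graph $\Gamma_E(R)$ is the simple graph whose vertices are the classes $[x]$ with $x\in Z^*(R)$, two distinct vertices $[x],[y]$ being adjacent iff $xy=0$. A fan graph is a complete bipartite graph $K_{n,1}$ with $n\in\mathbb N\cup\{\infty\}$ (one central vertex adjacent to all others, and no other edges). $\operatorname{Ass}(R)$ is the set of prime ideals of the form $\operatorname{ann}(y)$, $y\in R$. *)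

From mathcomp Require Import all_boot all_order all_algebra.
Set Implicit Arguments. Unset Strict Implicit. Unset Printing Implicit Defensive.
Import GRing.Theory.
Local Open Scope ring_scope.

Section Defs.
Variable R : comPzRingType.

Definition seteq (A B : R -> Prop) : Prop := forall z, A z <-> B z.

Definition ann (x : R) : R -> Prop := fun z => x * z = 0.

Definition ann_equiv (x y : R) : Prop := seteq (ann x) (ann y).

Definition nz_zero_divisor (x : R) : Prop := x <> 0 /\ exists y : R, y <> 0 /\ x * y = 0.

(* Gamma_E(R): vertices are ~-classes [x] of elements x in Z*(R); distinct
   classes [x],[y] are adjacent iff x y = 0 (independent of representatives).
   We work with representatives. *)
Definition GammaE_adj (x y : R) : Prop :=
  nz_zero_divisor x /\ nz_zero_divisor y /\ ~ ann_equiv x y /\ x * y = 0.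

(* Gamma_E(R) is a fan graph K_{n,1} (n finite or infinite): there is a
   central vertex [c] such that two distinct vertices are adjacent iff one of
   them is [c]. *)
Definition GammaE_is_fan : Prop :=
  exists c : R, nz_zero_divisor c /\
    forall x y : R, nz_zero_divisor x -> nz_zero_divisor y -> ~ ann_equiv x y ->
      (GammaE_adj x y <-> (ann_equiv x c \/ ann_equiv y c)).

Definition GammaE_at_least_4_vertices : Prop :=
  exists x1 x2 x3 x4 : R,
    [/\ nz_zero_divisor x1, nz_zero_divisor x2, nz_zero_divisor x3 & nz_zero_divisor x4] /\
    (~ ann_equiv x1 x2 /\ ~ ann_equiv x1 x3 /\ ~ ann_equiv x1 x4 /\
     ~ ann_equiv x2 x3 /\ ~ ann_equiv x2 x4 /\ ~ ann_equiv x3 x4).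

Definition is_ideal (I : R -> Prop) : Prop :=
  [/\ I 0, (forall a b, I a -> I b -> I (a + b)) & (forall r a, I a -> I (r * a))].

Definition is_prime_ideal (P : R -> Prop) : Prop :=
  [/\ is_ideal P, ~ P 1 & (forall a b, P (a * b) -> P a \/ P b)].

Definition noetherian : Prop :=
  forall I : nat -> R -> Prop, (forall n, is_ideal (I n)) ->
    (forall n x, I n x -> I n.+1 x) ->
    exists N : nat, forall n, (N <= n)%N -> forall x, I n x -> I N x.

Definition is_associated_prime (P : R -> Prop) : Prop :=
  is_prime_ideal P /\ exists y : R, seteq P (ann y).

Definition ideal_mul (I J : R -> Prop) : R -> Prop :=
  fun x => exists s : seq (R * R),
    (forall ab, ab \in s -> I ab.1 /\ J ab.2) /\
    x = \sum_(ab <- s) (ab.1 * ab.2).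

Definition zero_ideal : R -> Prop := fun x => x = 0.

(* characteristic of R is n: the kernel of Z -> R is nZ (n = 0 for char 0) *)
Definition char_is (n : nat) : Prop :=
  forall m : nat, (m%:R : R) = 0 <-> (n %| m)%N.

End Defs.

(* Every annihilator of a nonzero element lies in an associated prime (Noetherianity),
   and an annihilator of a leaf of the fan cannot be prime: it would force two
   inequivalent leaves to have the same annihilator.  Hence p = ann(c), for the centre c,
   is the unique associated prime and contains every zero divisor.  Among three
   inequivalent leaves two are nilpotent, say r1 and r2; pushing products of elements of
   p against r1 and r2 shows p^2 kills p.  If 2 were a nonzerodivisor, the leaves
   r1 + r2 and r1 - r2 would have nonzero squares yet annihilate each other, which is
   impossible; so 2 lies in p and 8 = 2^3 lies in p^3 = 0. *)
From mathcomp Require Import all_boot all_order all_algebra.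
From mathcomp Require Import ring.
From Stdlib Require Import Classical_Prop IndefiniteDescription.
Set Implicit Arguments. Unset Strict Implicit.
Import GRing.Theory.
Local Open Scope ring_scope.

Section Annihilators.
Variable R : comPzRingType.
Implicit Types a b c u v w x y z : R.

Definition ann_le x y := forall z, x * z = 0 -> y * z = 0.

Definition prime_ann w := forall a b, w * (a * b) = 0 -> w * a = 0 \/ w * b = 0.

Definition fan_leaf c x := nz_zero_divisor x /\ ~ ann_equiv x c.

Definition three_leaves c :=
  exists l1 l2 l3, [/\ fan_leaf c l1, fan_leaf c l2, fan_leaf c l3 &
    ~ ann_equiv l1 l2 /\ ~ ann_equiv l1 l3 /\ ~ ann_equiv l2 l3].

Lemma ann_equivP x y : ann_equiv x y <-> ann_le x y /\ ann_le y x.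
Proof.
split=> [E | [le_xy le_yx] z]; first by split=> z; move/(E z).
by split; [apply: le_xy | apply: le_yx].
Qed.

Lemma ann_equiv_refl x : ann_equiv x x.
Proof. by []. Qed.

Lemma ann_equiv_sym x y : ann_equiv x y -> ann_equiv y x.
Proof. by move=> E z; split; move/(E z). Qed.

Lemma ann_equiv_trans x y w : ann_equiv x y -> ann_equiv y w -> ann_equiv x w.
Proof. by move=> Exy Eyw z; split=> H; [apply/(Eyw z)/(Exy z) | apply/(Exy z)/(Eyw z)]. Qed.

Lemma ann_le_trans x y w : ann_le x y -> ann_le y w -> ann_le x w.
Proof. by move=> le_xy le_yw z /le_xy /le_yw. Qed.

Lemma ann_le_mulr x a : ann_le x (x * a).
Proof. by move=> z xz0; rewrite mulrAC xz0 mul0r. Qed.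

Lemma ann_is_ideal w : is_ideal (ann w).
Proof.
split; rewrite /ann; first by rewrite mulr0.
  by move=> a b wa0 wb0; rewrite mulrDr wa0 wb0 addr0.
by move=> r a wa0; rewrite mulrCA wa0 mulr0.
Qed.

Lemma nz_zero_divisor_of_mul x y : x <> 0 -> y <> 0 -> x * y = 0 -> nz_zero_divisor x.
Proof. by move=> x0 y0 xy0; split=> //; exists y. Qed.

Lemma prime_ann_equiv x y : ann_equiv x y -> prime_ann x -> prime_ann y.
Proof.
by move=> Exy px a b /(Exy _) /px [] /(Exy _); [left | right].
Qed.

Lemma not_prime_ann_strict w : ~ prime_ann w ->
  exists a, w * a <> 0 /\ exists2 b, w * a * b = 0 & w * b <> 0.
Proof.
move=> npw; apply: NNPP => no_a; apply: npw => a b wab0.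
apply: NNPP => /not_or_and [wa0 wb0]; apply: no_a.
by exists a; split=> //; exists b; rewrite -?mulrA.
Qed.

(* An annihilator maximal among those of multiples of v is prime; ACC gives maximality. *)
Lemma noetherian_prime_ann_above v : noetherian R -> v <> 0 ->
  exists w, [/\ w <> 0, ann_le v w & prime_ann w].
Proof.
move=> noeth v0; apply: NNPP => no_w.
have step w : exists a, w <> 0 -> ann_le v w ->
    w * a <> 0 /\ exists2 b, w * a * b = 0 & w * b <> 0.
  case: (classic (w <> 0 /\ ann_le v w)) => [[w0 le_vw] | not_w]; last first.
    by exists 0 => w0 le_vw; case: not_w.
  have [|a Ha] := not_prime_ann_strict (w := w); last by exists a.
  by move=> pw; apply: no_w; exists w.
have [f Hf] := functional_choice _ step.
pose s n := iter n (fun w => w * f w) v.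
have s_ok n : s n <> 0 /\ ann_le v (s n).
  elim: n => [|n [sn0 le_vsn]]; first by split=> // z.
  split; first by case: (Hf _ sn0 le_vsn).
  by apply: ann_le_trans le_vsn _; apply: ann_le_mulr.
have [N stable] := noeth (fun n => ann (s n)) (fun n => ann_is_ideal (s n))
  (fun n => ann_le_mulr (x := s n) (f (s n))).
have [_ [b sN1b0 sNb]] := Hf _ (s_ok N).1 (s_ok N).2.
by apply/sNb/(stable N.+1 (leqnSn N) b).
Qed.

Lemma three_leaves_of_four_vertices c : GammaE_at_least_4_vertices R -> three_leaves c.
Proof.
move=> [x1 [x2 [x3 [x4 [[N1 N2 N3 N4] [E12 [E13 [E14 [E23 [E24 E34]]]]]]]]]].
have leaf_of x y : nz_zero_divisor y -> ann_equiv x c -> ~ ann_equiv x y -> fan_leaf c y.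
  by move=> Ny Exc Exy; split=> // Eyc; apply/Exy/(ann_equiv_trans Exc)/ann_equiv_sym.
case: (classic (ann_equiv x1 c)) => C1.
  by exists x2, x3, x4; split; try exact: leaf_of C1 _.
case: (classic (ann_equiv x2 c)) => C2.
  by exists x1, x3, x4; split; try exact: leaf_of C2 _.
case: (classic (ann_equiv x3 c)) => C3.
  exists x1, x2, x4; split=> //; exact: leaf_of C3 _.
by exists x1, x2, x3.
Qed.

End Annihilators.

Section FanGraph.
Variables (R : comPzRingType) (c : R).
Hypothesis c_zd : nz_zero_divisor c.
Hypothesis fan : forall x y : R, nz_zero_divisor x -> nz_zero_divisor y ->
  ~ ann_equiv x y -> (GammaE_adj x y <-> ann_equiv x c \/ ann_equiv y c).
Local Notation leaf := (fan_leaf c).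
Implicit Types u v w x y z : R.

Lemma c_neq0 : c <> 0.
Proof. by case: c_zd. Qed.

Lemma leaf_mulc x : leaf x -> c * x = 0.
Proof.
case=> x_zd x_c; have [_ adj] := fan x_zd c_zd x_c.
by have [_ [_ [_ xc0]]] := adj (or_intror (ann_equiv_refl c)); rewrite mulrC.
Qed.

Lemma leaf_orth_equiv x y : leaf x -> leaf y -> x * y = 0 -> ann_equiv x y.
Proof.
move=> [x_zd x_c] [y_zd y_c] xy0; apply: NNPP => xy.
by case: (proj1 (fan x_zd y_zd xy) (conj x_zd (conj y_zd (conj xy xy0)))).
Qed.

Lemma ann_c_cases u : c * u = 0 -> ann_le c u \/ leaf u.
Proof.
move=> cu0; case: (classic (u = 0)) => [-> | u0]; first by left=> z; rewrite mul0r.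
case: (classic (ann_equiv u c)) => [/ann_equivP[] | uc]; first by left.
by right; split=> //; apply: (nz_zero_divisor_of_mul u0 c_neq0); rewrite mulrC.
Qed.

(* A leaf with nonzero square annihilates no other leaf: it would be equivalent to it. *)
Lemma leaf_sqr_neq0_ann_le x w : leaf x -> x * x <> 0 -> x * w = 0 -> ann_le c w.
Proof.
move=> Lx xx0 xw0; case: (classic (w = 0)) => [-> z _ | w0]; first by rewrite mul0r.
have w_zd : nz_zero_divisor w.
  by apply: (nz_zero_divisor_of_mul w0 (proj1 Lx).1); rewrite mulrC.
case: (classic (ann_equiv w c)) => [/ann_equivP[] // | wc].
have /ann_equivP[_ le_wx] := leaf_orth_equiv Lx (conj w_zd wc) xw0.
by case: xx0; apply: le_wx; rewrite mulrC.
Qed.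

Lemma leaves_sqr_neq0_equiv x y : leaf x -> x * x <> 0 -> leaf y -> y * y <> 0 ->
  ann_equiv x y.
Proof.
have le x' y' : leaf x' -> x' * x' <> 0 -> leaf y' -> ann_le x' y'.
  move=> Lx xx0 Ly z /(leaf_sqr_neq0_ann_le Lx xx0) le_cz.
  by rewrite mulrC; apply: le_cz; apply: leaf_mulc.
by move=> Lx xx0 Ly yy0; apply/ann_equivP; split; apply: le.
Qed.

Lemma nilpotent_leaves_mul_ann_le x y : leaf x -> x * x = 0 -> leaf y -> y * y = 0 ->
  ann_le c (x * y).
Proof.
move=> Lx xx0 Ly yy0; have cxy0 : c * (x * y) = 0 by rewrite mulrA leaf_mulc // mul0r.
case: (ann_c_cases cxy0) => // Lxy.
have xyx0 : x * y * x = 0 by rewrite mulrAC xx0 mul0r.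
have /ann_equivP[le_xyx _] := leaf_orth_equiv Lxy Lx xyx0.
by case: Lxy => -[xy0 _] _; case: xy0; apply: le_xyx; rewrite -mulrA yy0 mulr0.
Qed.

Lemma leaf_ann_le_of_prime_leaf y x x' : leaf y -> prime_ann y ->
  leaf x -> leaf x' -> ~ ann_equiv x y -> ann_le x x'.
Proof.
move=> Ly py Lx Lx' xy w xw0.
case: (classic (w = 0)) => [-> | w0]; first by rewrite mulr0.
have yx0 : y * x <> 0.
  by move=> yx0; exact: xy (ann_equiv_sym (leaf_orth_equiv Ly Lx yx0)).
have wy0 : w * y = 0 by rewrite mulrC; case: (py x w) => //; rewrite xw0 mulr0.
have w_zd : nz_zero_divisor w.
  by apply: (nz_zero_divisor_of_mul w0 (proj1 Lx).1); rewrite mulrC.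
suff /ann_equivP[_ le_cw] : ann_equiv w c by rewrite mulrC; apply/le_cw/leaf_mulc.
apply: NNPP => wc; have /ann_equivP[le_wy _] := leaf_orth_equiv (conj w_zd wc) Ly wy0.
by apply/yx0/le_wy; rewrite mulrC.
Qed.

Section ThreeLeaves.
Hypothesis leaves : three_leaves c.

Lemma leaf_not_prime_ann y : leaf y -> ~ prime_ann y.
Proof.
move=> Ly py; have [l1 [l2 [l3 [L1 L2 L3 [N12 [N13 N23]]]]]] := leaves.
have equiv_of x x' : leaf x -> leaf x' -> ~ ann_equiv x y -> ~ ann_equiv x' y ->
    ann_equiv x x'.
  move=> Lx Lx' xy x'y; apply/ann_equivP.
  by split; apply: leaf_ann_le_of_prime_leaf Ly py _ _ _.
have ne x x' : ann_equiv x y -> ~ ann_equiv x x' -> ~ ann_equiv x' y.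
  by move=> xy xx' x'y; exact: xx' (ann_equiv_trans xy (ann_equiv_sym x'y)).
case: (classic (ann_equiv l1 y)) => [E1 | NE1].
  by apply: N23; apply: equiv_of => //; [exact: ne E1 N12 | exact: ne E1 N13].
case: (classic (ann_equiv l2 y)) => [E2 | NE2].
  by apply: N13; apply: equiv_of => //; exact: ne E2 N23.
by apply: N12; apply: equiv_of.
Qed.

Lemma prime_ann_equiv_c w : w <> 0 -> prime_ann w -> ann_equiv w c.
Proof.
move=> w0 pw; have [l1 [_ [_ [L1 _ _ _]]]] := leaves.
apply: NNPP => wc; apply: (leaf_not_prime_ann (y := w)) => //.
split=> //; case: (pw l1 c); first by rewrite (mulrC l1) leaf_mulc ?mulr0.
  by apply: nz_zero_divisor_of_mul w0 (proj1 L1).1.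
by apply: nz_zero_divisor_of_mul w0 c_neq0.
Qed.

Lemma exists_nilpotent_leaves : exists r1 r2,
  [/\ leaf r1 /\ r1 * r1 = 0, leaf r2 /\ r2 * r2 = 0 & ~ ann_equiv r1 r2].
Proof.
have [l1 [l2 [l3 [L1 L2 L3 [N12 [N13 N23]]]]]] := leaves.
have sqr_eq0 x y : leaf x -> leaf y -> ~ ann_equiv x y -> x * x = 0 \/ y * y = 0.
  move=> Lx Ly xy; apply: NNPP => /not_or_and [xx0 yy0].
  exact/xy/leaves_sqr_neq0_equiv.
case: (sqr_eq0 _ _ L1 L2 N12) => [s1 | s2].
  case: (sqr_eq0 _ _ L2 L3 N23) => [s2 | s3]; first by exists l1, l2.
  by exists l1, l3.
case: (sqr_eq0 _ _ L1 L3 N13) => [s1 | s3]; first by exists l1, l2.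
by exists l2, l3.
Qed.

(* If every nilpotent leaf kills w, then w is no leaf: it would be equivalent to two
   inequivalent nilpotent leaves. *)
Lemma ann_le_c_of_nilpotent_leaves_kill w : c * w = 0 ->
  (forall r, leaf r -> r * r = 0 -> r * w = 0) -> ann_le c w.
Proof.
move=> cw0 kill; case: (ann_c_cases cw0) => // Lw.
have [r1 [r2 [[Lr1 rr1] [Lr2 rr2] r12]]] := exists_nilpotent_leaves.
have E1 := leaf_orth_equiv Lr1 Lw (kill _ Lr1 rr1).
have E2 := leaf_orth_equiv Lr2 Lw (kill _ Lr2 rr2).
by exfalso; exact: r12 (ann_equiv_trans E1 (ann_equiv_sym E2)).
Qed.

Lemma leaf_mul_nilpotent_leaf_ann_le x y : leaf x -> leaf y -> y * y = 0 ->
  ann_le c (x * y).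
Proof.
move=> Lx Ly yy0; apply: ann_le_c_of_nilpotent_leaves_kill.
  by rewrite mulrA leaf_mulc // mul0r.
move=> r Lr rr0; rewrite mulrCA mulrC.
by apply: (nilpotent_leaves_mul_ann_le Lr rr0 Ly yy0); apply: leaf_mulc.
Qed.

Lemma leaves_mul_ann_le x y : leaf x -> leaf y -> ann_le c (x * y).
Proof.
move=> Lx Ly; apply: ann_le_c_of_nilpotent_leaves_kill.
  by rewrite mulrA leaf_mulc // mul0r.
move=> r Lr rr0; rewrite mulrA (mulrC r).
by apply: (leaf_mul_nilpotent_leaf_ann_le Lx Lr rr0); apply: leaf_mulc.
Qed.

Lemma ann_c_mul_ann_le u v : c * u = 0 -> c * v = 0 -> ann_le c (u * v).
Proof.
move=> cu0 cv0; case: (ann_c_cases cu0) => [le_cu z cz0 | Lu].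
  by rewrite -mulrA le_cu // mulrCA cz0 mulr0.
case: (ann_c_cases cv0) => [le_cv z cz0 | Lv]; last exact: leaves_mul_ann_le.
by rewrite -mulrA le_cv ?mulr0.
Qed.

Lemma ann_c_cube_eq0 u v w : c * u = 0 -> c * v = 0 -> c * w = 0 -> u * (v * w) = 0.
Proof. by move=> cu0 cv0 cw0; rewrite mulrC; apply: ann_c_mul_ann_le. Qed.

Lemma ideal_mul_ann_c_cube :
  seteq (ideal_mul (ann c) (ideal_mul (ann c) (ann c))) (@zero_ideal R).
Proof.
move=> z; split=> [[s [Hs ->]] | ->]; last by exists [::]; rewrite big_nil.
rewrite /zero_ideal big_seq big1 // => ab /Hs [cab1 [t [Ht ->]]].
rewrite mulr_sumr big_seq big1 // => de /Ht [cde1 cde2].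
exact: ann_c_cube_eq0.
Qed.

Hypothesis noeth : noetherian R.

Lemma ann_le_c v : v <> 0 -> ann_le v c.
Proof.
move=> v0; have [w [w0 le_vw pw]] := noetherian_prime_ann_above noeth v0.
by have /ann_equivP[le_wc _] := prime_ann_equiv_c w0 pw; apply: ann_le_trans le_wc.
Qed.

Lemma prime_ann_c : prime_ann c.
Proof.
have [w [w0 _ pw]] := noetherian_prime_ann_above noeth c_neq0.
exact: prime_ann_equiv (prime_ann_equiv_c w0 pw) pw.
Qed.

Lemma is_associated_prime_ann_c : is_associated_prime (ann c).
Proof.
split; last by exists c.
split; [exact: ann_is_ideal | | exact: prime_ann_c].
by rewrite /ann mulr1; apply: c_neq0.
Qed.

Lemma associated_prime_eq_ann_c q : is_associated_prime q -> seteq q (ann c).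
Proof.
move=> [[_ q1 qprime] [y qy]].
have y0 : y <> 0 by move=> y0; apply/q1/(qy 1); rewrite /ann y0 mul0r.
have py : prime_ann y by move=> a b /(qy _)/qprime [] /(qy _); [left | right].
by move=> z; apply: iff_trans (qy z) (prime_ann_equiv_c y0 py z).
Qed.

(* If 2 were regular, r1 + r2 and r1 - r2 would be leaves with nonzero squares
   (+-2 r1 r2) that annihilate each other. *)
Lemma ann_c_natr2 : c * 2%:R = 0.
Proof.
apply: NNPP => c2.
have two_reg v : v <> 0 -> 2%:R * v <> 0.
  by move=> v0 v2; apply/c2/(ann_le_c v0); rewrite mulrC.
have [r1 [r2 [[Lr1 rr1] [Lr2 rr2] r12]]] := exists_nilpotent_leaves.
have r1r2 : r1 * r2 <> 0 by move=> r1r20; exact: r12 (leaf_orth_equiv Lr1 Lr2 r1r20).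
have leaf_of t r : c * t = 0 -> leaf r -> t * r <> 0 -> leaf t.
  move=> ct0 Lr tr0; case: (ann_c_cases ct0) => // le_ct.
  by exfalso; exact: tr0 (le_ct _ (leaf_mulc Lr)).
have cr1 := leaf_mulc Lr1; have cr2 := leaf_mulc Lr2.
have Lu : leaf (r1 + r2).
  apply: (leaf_of _ r1 _ Lr1); first by rewrite mulrDr cr1 cr2 addr0.
  by rewrite mulrDl rr1 add0r mulrC.
have Lw : leaf (r1 - r2).
  apply: (leaf_of _ r2 _ Lr2); first by rewrite mulrBr cr1 cr2 subr0.
  by rewrite mulrBl rr2 subr0.
have uu : (r1 + r2) * (r1 + r2) <> 0.
  have -> : (r1 + r2) * (r1 + r2) = r1 * r1 + 2%:R * (r1 * r2) + r2 * r2 by ring.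
  by rewrite rr1 rr2 add0r addr0; apply: two_reg.
have ww : (r1 - r2) * (r1 - r2) <> 0.
  have -> : (r1 - r2) * (r1 - r2) = r1 * r1 - 2%:R * (r1 * r2) + r2 * r2 by ring.
  by rewrite rr1 rr2 add0r addr0 => /eqP; rewrite oppr_eq0 => /eqP; apply: two_reg.
have uw0 : (r1 + r2) * (r1 - r2) = 0.
  have -> : (r1 + r2) * (r1 - r2) = r1 * r1 - r2 * r2 by ring.
  by rewrite rr1 rr2 subr0.
by have /ann_equivP[le_uw _] := leaves_sqr_neq0_equiv Lu uu Lw ww; apply/ww/le_uw.
Qed.

Lemma natr8_eq0 : (8%:R : R) = 0.
Proof.
have -> : (8%:R : R) = 2%:R * (2%:R * 2%:R) by rewrite -!natrM.
by apply: ann_c_cube_eq0; apply: ann_c_natr2.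
Qed.

End ThreeLeaves.
End FanGraph.

Section Characteristic.
Variable R : comPzRingType.

Lemma natr_modn n m : (n%:R : R) = 0 -> (m%:R : R) = (m %% n)%:R.
Proof. by move=> n0; rewrite {1}(divn_eq m n) natrD natrM n0 mulr0 add0r. Qed.

Lemma char_is_of_min n : (0 < n)%N -> (n%:R : R) = 0 ->
  (forall r, (0 < r < n)%N -> (r%:R : R) <> 0) -> char_is R n.
Proof.
move=> n_gt0 n0 min_n m; rewrite (natr_modn m n0) /dvdn.
split=> [mn0 | /eqP ->] //.
apply/eqP; apply: NNPP => mn; apply: (min_n _ _ mn0).
by rewrite lt0n ltn_mod n_gt0 andbT; apply/eqP.
Qed.

Lemma natr_mul_modn_eq0 n r k : (n%:R : R) = 0 -> (r%:R : R) = 0 ->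
  ((r * k %% n)%:R : R) = 0.
Proof. by move=> n0 r0; rewrite -natr_modn // natrM r0 mul0r. Qed.

Lemma char_is_2_4_8 : (1 : R) <> 0 -> (8%:R : R) = 0 ->
  char_is R 2 \/ char_is R 4 \/ char_is R 8.
Proof.
move=> one0 eight0.
case: (classic ((2%:R : R) = 0)) => two0.
  by left; apply: char_is_of_min => // -[|[|r]].
case: (classic ((4%:R : R) = 0)) => four0.
  right; left; apply: char_is_of_min => // -[|[|[|[|r]]]] //= _.
  by move/(natr_mul_modn_eq0 3 four0).
right; right; apply: char_is_of_min => // -[|[|[|[|[|[|[|[|r]]]]]]]] //= _.
- by move/(natr_mul_modn_eq0 3 eight0).
- by move/(natr_mul_modn_eq0 5 eight0).
- by move/(natr_mul_modn_eq0 3 eight0).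
- by move/(natr_mul_modn_eq0 7 eight0).
Qed.

End Characteristic.

Theorem proposition2p4 (R : comPzRingType) :
  noetherian R -> GammaE_is_fan R -> GammaE_at_least_4_vertices R ->
  exists p : R -> Prop,
    [/\ is_associated_prime p /\
          (forall q, is_associated_prime q -> seteq q p),
        seteq (ideal_mul p (ideal_mul p p)) (@zero_ideal R)
      & char_is R 2 \/ char_is R 4 \/ char_is R 8].
Proof.
move=> noeth [c [c_zd fan]] /(three_leaves_of_four_vertices c) leaves.
exists (ann c); split.
- by split; [apply: is_associated_prime_ann_c | apply: associated_prime_eq_ann_c].
- by apply: ideal_mul_ann_c_cube.
- apply: char_is_2_4_8; last exact: (natr8_eq0 c_zd fan leaves noeth).
  by move=> one0; apply: (c_neq0 c_zd); rewrite -[c]mulr1 one0 mulr0.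
Qed.
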